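(* Let $A\in\mathbb{R}^{m\times N}$, $K\subseteq[N]$, $0<\rho<1$ and $\tau>0$. The following are equivalent: (i) $A$ satisfies the robust binary null space property with constants $\rho,\tau$ relative to $K$; (ii) for all $x,z\in\mathbb{R}^N$ with $z-x\in H_K$, $\sum_{i\in K}x_i-\sum_{i\in K}z_i\le \rho\|(z-x)_{K^C}\|_1+\tau\|A(z-x)\|_2$; (iii) for all $z\in[0,1]^N$, $|K|-\|z_K\|_1\le\rho\|z_{K^C}\|_1+\tau\|A(z-\mathbb{1}_K)\|_2$.
   Context: $K^C=[N]\setminus K$; for $w\in\mathbb{R}^N$ and $S\subseteq[N]$, $w_S$ agrees with $w$ on $S$ and is zero elsewhere; $\mathbb{1}_K$ has entries $1$ on $K$, $0$ elsewhere. $H_K=\{w\in\mathbb{R}^N: w_i\le 0 \text{ for } i\in K,\ w_i\ge 0\text{ for } i\in K^C\}$. $A$ satisfies the robust binary null space property with constants $\rho,\tau$ relative to $K$ if $-\sum_{i\in K}v_i\le\rho\sum_{i\in K^C}v_i+\tau\|Av\|_2$ for every $v\in H_K$. *)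

From mathcomp Require Import all_boot all_order all_algebra.
From mathcomp Require Import reals.
Set Implicit Arguments. Unset Strict Implicit. Unset Printing Implicit Defensive.
Import Order.TTheory GRing.Theory Num.Theory.
Local Open Scope ring_scope.

Section Defs.
Variable R : realType.

Definition restr (N : nat) (w : 'cV[R]_N) (S : {set 'I_N}) : 'cV[R]_N :=
  \col_i (if i \in S then w i 0 else 0).

Definition norm1 (N : nat) (w : 'cV[R]_N) : R := \sum_i `|w i 0|.

Definition norm2 (m : nat) (v : 'cV[R]_m) : R := Num.sqrt (\sum_i (v i 0) ^+ 2).

Definition indic (N : nat) (K : {set 'I_N}) : 'cV[R]_N :=
  \col_i (if i \in K then 1 else 0).

Definition inH (N : nat) (K : {set 'I_N}) (w : 'cV[R]_N) : Prop :=
  (forall i, i \in K -> w i 0 <= 0) /\ (forall i, i \in ~: K -> 0 <= w i 0).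

Definition robust_binary_NSP (m N : nat) (A : 'M[R]_(m, N)) (K : {set 'I_N})
  (rho tau : R) : Prop :=
  forall v : 'cV[R]_N, inH K v ->
    - (\sum_(i in K) v i 0) <= rho * (\sum_(i in ~: K) v i 0) + tau * norm2 (A *m v).
End Defs.

(* Every statement is the inequality
     -\sum_(i in K) v_i <= rho \sum_(i in ~: K) v_i + tau ||A v||_2
   for some v in H_K, and it is invariant under scaling v by t > 0.
   (ii) is this inequality for v = z - x; (iii) for v = z - 1_K, and z ranges over
   [0,1]^N exactly when v ranges over the vectors of H_K with entries in [-1, 1].
   Scaling any v in H_K by (1 + ||v||_1)^-1 lands it there, so (iii) implies (i). *)
From mathcomp Require Import all_boot all_order all_algebra.
From mathcomp Require Import reals.
From mathcomp Require Import lra.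
Set Implicit Arguments. Unset Strict Implicit. Unset Printing Implicit Defensive.
Import Order.TTheory GRing.Theory Num.Theory.
Local Open Scope ring_scope.

Section Norms.
Variable R : realType.

Lemma norm1_restr N (w : 'cV[R]_N) (S : {set 'I_N}) :
  norm1 (restr w S) = \sum_(i in S) `|w i 0|.
Proof.
rewrite /norm1 [RHS]big_mkcond /=; apply: eq_bigr => i _; rewrite mxE.
by case: ifP => //; rewrite normr0.
Qed.

Lemma norm1_restr_ge0 N (w : 'cV[R]_N) (S : {set 'I_N}) :
  (forall i, i \in S -> 0 <= w i 0) -> norm1 (restr w S) = \sum_(i in S) w i 0.
Proof.
by move=> w_ge0; rewrite norm1_restr; apply: eq_bigr => i /w_ge0 /ger0_norm.
Qed.

Lemma ler_norm1 N (w : 'cV[R]_N) i : `|w i 0| <= norm1 w.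
Proof. by rewrite /norm1 (bigD1 i) //= lerDl sumr_ge0. Qed.

Lemma norm2Z m (t : R) (w : 'cV[R]_m) : 0 <= t -> norm2 (t *: w) = t * norm2 w.
Proof.
move=> t_ge0; rewrite /norm2.
have -> : \sum_i ((t *: w) i 0) ^+ 2 = t ^+ 2 * \sum_i (w i 0) ^+ 2.
  by rewrite mulr_sumr; apply: eq_bigr => i _; rewrite mxE exprMn.
by rewrite sqrtrM ?sqr_ge0 // sqrtr_sqr ger0_norm.
Qed.

Lemma sum_colB N (S : {set 'I_N}) (w w' : 'cV[R]_N) :
  \sum_(i in S) (w - w') i 0 = \sum_(i in S) w i 0 - \sum_(i in S) w' i 0.
Proof. by rewrite -sumrB; apply: eq_bigr => i _; rewrite !mxE. Qed.

Lemma sum_indic N (K : {set 'I_N}) : \sum_(i in K) indic R K i 0 = #|K|%:R.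
Proof. by rewrite -sumr_const; apply: eq_bigr => i iK; rewrite mxE iK. Qed.

Lemma sum_indicC N (K : {set 'I_N}) : \sum_(i in ~: K) indic R K i 0 = 0.
Proof. by rewrite big1 // => i; rewrite in_setC mxE => /negbTE ->. Qed.

End Norms.

Section BinaryNSP.
Variables (R : realType) (m N : nat) (A : 'M[R]_(m, N)) (K : {set 'I_N}).
Variables rho tau : R.

Definition nsp_ineq (v : 'cV[R]_N) : Prop :=
  - (\sum_(i in K) v i 0) <= rho * (\sum_(i in ~: K) v i 0) + tau * norm2 (A *m v).

Definition unit_cube (z : 'cV[R]_N) : Prop := forall i, 0 <= z i 0 <= 1.

Lemma inHZ (t : R) (v : 'cV[R]_N) : 0 <= t -> inH K v -> inH K (t *: v).
Proof.
move=> t_ge0 [vK vKC]; split=> i iS; rewrite mxE.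
  by rewrite mulr_ge0_le0 // vK.
by rewrite mulr_ge0 // vKC.
Qed.

Lemma nsp_ineqZ (t : R) (v : 'cV[R]_N) : 0 < t -> nsp_ineq v -> nsp_ineq (t *: v).
Proof.
move=> t_gt0; rewrite /nsp_ineq -scalemxAr norm2Z; last exact: ltW.
have sumZ (S : {set 'I_N}) : \sum_(i in S) (t *: v) i 0 = t * \sum_(i in S) v i 0.
  by rewrite mulr_sumr; apply: eq_bigr => i _; rewrite mxE.
rewrite !sumZ -mulrN mulrCA (mulrCA tau) -mulrDr.
by rewrite ler_pM2l.
Qed.

Lemma inH_sub_indic (z : 'cV[R]_N) : unit_cube z -> inH K (z - indic R K).
Proof.
move=> z01; split=> i; rewrite !mxE => iK; have /andP[z_ge0 z_le1] := z01 i.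
  by rewrite iK subr_le0.
by move: iK; rewrite in_setC => /negbTE ->; rewrite subr0.
Qed.

Lemma unit_cube_add_indic (v : 'cV[R]_N) :
  inH K v -> (forall i, `|v i 0| <= 1) -> unit_cube (indic R K + v).
Proof.
move=> [vK vKC] v_le1 i; rewrite !mxE; have := v_le1 i.
case: (boolP (i \in K)) => iK.
  have v_le0 := vK i iK.
  by rewrite ler0_norm // => ?; apply/andP; split; lra.
have v_ge0 : 0 <= v i 0 by apply: vKC; rewrite in_setC.
by rewrite ger0_norm // add0r v_ge0.
Qed.

Lemma robust_binary_NSP_cube :
  (forall v, inH K v -> (forall i, `|v i 0| <= 1) -> nsp_ineq v) ->
  robust_binary_NSP A K rho tau.
Proof.
move=> small_nsp v vH.
have t_gt0 : 0 < (1 + norm1 v)^-1 by rewrite invr_gt0 ltr_pwDl // sumr_ge0.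
rewrite -[v](scalerK (lt0r_neq0 t_gt0)).
apply: nsp_ineqZ; first by rewrite invr_gt0.
apply: small_nsp => [|i]; first exact: inHZ (ltW t_gt0) vH.
rewrite mxE normrM gtr0_norm // ler_pdivrMl ?ltr_pwDl ?sumr_ge0 // mulr1.
by rewrite (le_trans (ler_norm1 v i)) // lerDr.
Qed.

End BinaryNSP.

Theorem lemma2p12 (R : realType) (m N : nat) (A : 'M[R]_(m, N)) (K : {set 'I_N})
  (rho tau : R) (hrho0 : 0 < rho) (hrho1 : rho < 1) (htau : 0 < tau) :
  (robust_binary_NSP A K rho tau <->
     (forall x z : 'cV[R]_N, inH K (z - x) ->
        (\sum_(i in K) x i 0) - (\sum_(i in K) z i 0)
          <= rho * norm1 (restr (z - x) (~: K)) + tau * norm2 (A *m (z - x))))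
  /\
  (robust_binary_NSP A K rho tau <->
     (forall z : 'cV[R]_N, (forall i, 0 <= z i 0 <= 1) ->
        (#|K|%:R : R) - norm1 (restr z K)
          <= rho * norm1 (restr z (~: K)) + tau * norm2 (A *m (z - indic R K)))).
Proof.
have ii_nsp x z : inH K (z - x) ->
    (\sum_(i in K) x i 0) - (\sum_(i in K) z i 0)
      <= rho * norm1 (restr (z - x) (~: K)) + tau * norm2 (A *m (z - x))
    <-> nsp_ineq A K rho tau (z - x).
  by move=> [_ vKC]; rewrite norm1_restr_ge0 // /nsp_ineq (sum_colB K) opprB.
have iii_nsp z : unit_cube z ->
    (#|K|%:R : R) - norm1 (restr z K)
      <= rho * norm1 (restr z (~: K)) + tau * norm2 (A *m (z - indic R K))
    <-> nsp_ineq A K rho tau (z - indic R K).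
  move=> z01; rewrite !norm1_restr_ge0 => [|i _|i _]; try by case/andP: (z01 i).
  by rewrite /nsp_ineq !sum_colB sum_indic sum_indicC subr0 opprB.
split; split.
- by move=> nsp x z vH; apply/ii_nsp => //; apply: nsp.
- move=> ii v vH; have vH0 : inH K (v - 0) by rewrite subr0.
  by have /(ii_nsp _ _ vH0) := ii 0 v vH0; rewrite subr0.
- by move=> nsp z z01; apply/iii_nsp => //; apply/nsp/inH_sub_indic.
- move=> iii; apply: robust_binary_NSP_cube => v vH v_le1.
  have z01 := unit_cube_add_indic vH v_le1.
  by have := iii _ z01; rewrite (iii_nsp _ z01) addrC addKr.
Qed.
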